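(* There is a constant $c_1>0$ such that for all sufficiently large $N$ there exists a non-feasible pair $(N,M)$ for the family of line graphs of acyclic graphs, and the smallest such $M$ satisfies $M \leq \frac{N^2}{2} - c_1N\sqrt{N}$.
   Context: All graphs are finite and simple; $L(F)$ is the line graph of $F$. For integers $N \ge 1$ and $0\le M\le\binom{N}{2}$, the pair $(N,M)$ is feasible for the family of line graphs of acyclic graphs if there is an acyclic graph $F$ with $N$ edges such that $L(F)$ has exactly $M$ edges; otherwise it is non-feasible. *)

From mathcomp Require Import all_boot.
Set Implicit Arguments. Unset Strict Implicit. Unset Printing Implicit Defensive.

Definition simple_graph (n : nat) (e : rel 'I_n) : Prop :=
  symmetric e /\ irreflexive e.

Definition acyclic (n : nat) (e : rel 'I_n) : Prop :=
  forall c : seq 'I_n, 3 <= size c -> ~ ucycle e c.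

Definition edges (n : nat) (e : rel 'I_n) : {set {set 'I_n}} :=
  [set E : {set 'I_n} | [exists x : 'I_n, exists y : 'I_n, e x y && (E == [set x; y])]].

Definition line_graph_edges (n : nat) (e : rel 'I_n) : {set {set {set 'I_n}}} :=
  [set P : {set {set 'I_n}} | [exists E1 in edges e, exists E2 in edges e,
     [&& E1 != E2, E1 :&: E2 != set0 & P == [set E1; E2]]]].

Definition feasible (N M : nat) : Prop :=
  exists (n : nat) (e : rel 'I_n),
    simple_graph e /\ acyclic e /\
    #|edges e| = N /\ #|line_graph_edges e| = M.

Definition non_feasible (N M : nat) : Prop :=
  M <= 'C(N, 2) /\ ~ feasible N M.

(* Let k = floor(sqrt N).  In a forest with N edges the line graph has
   sum_v C(deg v, 2) edges, while sum_v (deg v - 1) <= N - 1 (delete a leaf and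
   induct).  If some degree is at least N - k, the line graph already has
   C(N - k, 2) edges.  Otherwise the degree budget N - 1 spread over degrees below
   N - k keeps sum_v C(deg v, 2) below C(N - k, 2) - 1 once k^2 <= N and
   5k + 6 < N.  So M = C(N - k, 2) - 1 is not feasible, and
   C(N - k, 2) - 1 <= N^2/2 - N sqrt N / 4 for N >= 100. *)

From mathcomp Require Import all_boot.
From mathcomp Require Import zify.
From Stdlib Require Import Reals Lra Psatz Classical Wf_nat.
Set Implicit Arguments. Unset Strict Implicit. Unset Printing Implicit Defensive.

Lemma ex_maxn_bounded (P : nat -> Prop) B :
  (exists k, P k) -> (forall k, P k -> k <= B) -> exists2 k, P k & forall j, P j -> j <= k.
Proof.
move=> [k0 Pk0] P_le.
have P_sub k : P k -> P (B - (B - k)) by move=> Pk; rewrite subKn ?P_le.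
have [j [[Pj j_min] _]] := dec_inh_nat_subset_has_unique_least_element
  (fun j => P (B - j)) (fun j => classic _) (ex_intro _ (B - k0) (P_sub _ Pk0)).
exists (B - j) => // i /[dup] Pi /P_sub /j_min /leP; have := P_le i Pi; lia.
Qed.

Definition nbr n (e : rel 'I_n) v := [set y | e v y].
Definition deg n (e : rel 'I_n) v := #|nbr e v|.

Lemma edgesP n (e : rel 'I_n) E :
  reflect (exists x y, e x y /\ E = [set x; y]) (E \in edges e).
Proof.
rewrite inE; apply: (iffP existsP) => [[x /existsP [y /andP [exy /eqP ->]]]|[x [y [exy ->]]]].
  by exists x, y.
by exists x; apply/existsP; exists y; rewrite exy eqxx.
Qed.

Lemma leq_card_bigcup (I T : finType) (F : I -> {set T}) :
  #|\bigcup_i F i| <= \sum_i #|F i|.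
Proof.
elim/big_rec2: _ => [|i x y _ h]; first by rewrite cards0.
by apply: leq_trans (leq_card_setU _ _) _; rewrite leq_add2l.
Qed.

Lemma set2_inj (T : finType) (v x y : T) : v != x -> [set v; x] = [set v; y] -> x = y.
Proof.
move=> vx h; have : x \in [set v; y] by rewrite -h !inE eqxx orbT.
by rewrite !inE => /orP [/eqP xv|/eqP //]; rewrite xv eqxx in vx.
Qed.

Section SimpleGraph.
Variables (n : nat) (e : rel 'I_n).
Hypotheses (e_sym : symmetric e) (e_irr : irreflexive e).

Lemma edge_at x y v : e x y -> v \in [set x; y] -> exists2 u, e v u & [set x; y] = [set v; u].
Proof.
move=> exy; rewrite !inE => /orP [/eqP ->|/eqP ->]; first by exists y.
by exists x; rewrite 1?e_sym // setUC.
Qed.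

Definition pairs_at v := [set A : {set 'I_n} | A \subset nbr e v & #|A| == 2].
Definition spokes v (A : {set 'I_n}) := [set [set v; x] | x in A].

Lemma spokes2 v x y : spokes v [set x; y] = [set [set v; x]; [set v; y]].
Proof. by rewrite /spokes imsetU1 imset_set1. Qed.

(* Two distinct edges meeting at v are the spokes of v towards two distinct neighbours. *)
Lemma line_graph_edges_sub_spokes :
  line_graph_edges e \subset \bigcup_v (spokes v @: pairs_at v).
Proof.
apply/subsetP => P; rewrite inE => /existsP [E1 /andP [/edgesP [x1 [y1 [e1 ->]]]]].
case/existsP => E2 /andP [/edgesP [x2 [y2 [e2 ->]]] /and3P [ne /set0Pn [v]]].
rewrite inE => /andP [v1 v2] /eqP ->.
case: (edge_at e1 v1) => u1 eu1 dE1; case: (edge_at e2 v2) => u2 eu2 dE2.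
rewrite dE1 dE2 in ne *; apply/bigcupP; exists v => //; apply/imsetP.
exists [set u1; u2]; last by rewrite spokes2.
rewrite inE subUset !sub1set !inE eu1 eu2 cards2 eqSS eqb1.
by apply: contraNneq ne => ->.
Qed.

Lemma card_line_graph_edges_le : #|line_graph_edges e| <= \sum_v 'C(deg e v, 2).
Proof.
apply: leq_trans (subset_leq_card line_graph_edges_sub_spokes) _.
apply: leq_trans (leq_card_bigcup _) _; apply: leq_sum => v _.
by rewrite -cards_draws; apply: leq_imset_card.
Qed.

Lemma mem_spokes v (A : {set 'I_n}) x :
  A \subset nbr e v -> ([set v; x] \in spokes v A) = (x \in A).
Proof.
move=> sA; apply/imsetP/idP => [[y yA E]|xA]; last by exists x.
have vy : v != y by apply: contraTneq (subsetP sA y yA) => <-; rewrite inE e_irr.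
have vx : v != x.
  apply: contra_neq vy => vx; move: E; rewrite -vx setUid => /setP/(_ y).
  by rewrite !inE eqxx orbT => /eqP.
by rewrite (set2_inj vx E).
Qed.

Lemma bin2_deg_le_card_line_graph_edges v : 'C(deg e v, 2) <= #|line_graph_edges e|.
Proof.
rewrite -cards_draws -(@card_in_imset _ _ (spokes v)); last first.
  move=> A B; rewrite !inE => /andP [sA _] /andP [sB _] E.
  by apply/setP => x; rewrite -(mem_spokes x sA) -(mem_spokes x sB) E.
apply: subset_leq_card; apply/subsetP => P /imsetP [A].
rewrite inE => /andP [sA /cards2P [x [y [xy dA]]]] ->.
move: sA; rewrite dA subUset !sub1set !inE => /andP [evx evy].
rewrite spokes2; apply/existsP; exists [set v; x].
apply/andP; split; first by apply/edgesP; exists v, x.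
apply/existsP; exists [set v; y].
apply/andP; split; first by apply/edgesP; exists v, y.
apply/and3P; split => //.
- apply: contra_neq xy; apply: set2_inj.
  by apply: contraTneq evx => <-; rewrite e_irr.
- by apply/set0Pn; exists v; rewrite !inE eqxx.
Qed.

End SimpleGraph.

Section Forest.
Variables (n : nat) (e : rel 'I_n).
Hypotheses (e_sym : symmetric e) (e_irr : irreflexive e) (e_acyc : acyclic e).

(* The start of a longest path is a leaf: another neighbour would either extend
   the path or close a cycle with it. *)
Lemma acyclic_leaf x0 y0 : e x0 y0 -> exists v w, nbr e v = [set w].
Proof.
move=> e0.
pose long k := exists x p, [/\ size p = k, path e x p & uniq (x :: p)].
have long1 : long 1.
  exists x0, [:: y0]; rewrite /= e0 !inE !andbT; split => //.
  by apply: contraTneq e0 => ->; rewrite e_irr.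
have long_le k : long k -> k <= n.
  case=> x [p [<- _ /card_uniqP /= size_p]].
  by have := max_card (mem (x :: p)); rewrite card_ord size_p => /ltnW.
have [k [x [[|y p] [<- path_p uniq_p]]] k_max] := ex_maxn_bounded (ex_intro _ 1 long1) long_le.
  by have := k_max 1 long1.
exists x, y; apply/setP => z; rewrite !inE; apply/idP/eqP => [exz|->]; last by case/andP: path_p.
have z_in : z \in x :: y :: p.
  apply/negPn/negP => z_notin; suff /k_max : long (size (y :: p)).+1 by rewrite ltnn.
  exists z, [:: x, y & p]; rewrite cons_uniq z_notin uniq_p.
  by rewrite -cat1s cat_path /= e_sym exz -/(path e x (y :: p)) path_p.
move: z_in; rewrite !inE => /or3P [/eqP zx|/eqP //|z_in]; first by rewrite zx e_irr in exz.
case: (eqVneq z y) => // zy; exfalso.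
case/path.splitP: z_in path_p uniq_p => p1 p2.
rewrite -(cat_cons y) cat_path -(cat_cons x) cat_uniq => /andP [path_p1 _] /andP [uniq_p1 _].
apply: (e_acyc (c := [:: x, y & rcons p1 z])); first by rewrite /= size_rcons.
rewrite /ucycle uniq_p1 andbT /cycle -rcons_cons rcons_path path_p1 /=.
by rewrite last_rcons e_sym exz.
Qed.

End Forest.

Definition del_vertex n (e : rel 'I_n) v : rel 'I_n := [rel x y | [&& e x y, x != v & y != v]].

Section DeleteVertex.
Variables (n : nat) (e : rel 'I_n) (v : 'I_n).

Lemma del_vertex_sym : symmetric e -> symmetric (del_vertex e v).
Proof. by move=> e_sym x y; rewrite /del_vertex /= e_sym [(x != v) && _]andbC. Qed.

Lemma del_vertex_irr : irreflexive e -> irreflexive (del_vertex e v).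
Proof. by move=> e_irr x; rewrite /del_vertex /= e_irr. Qed.

Lemma del_vertex_acyclic : acyclic e -> acyclic (del_vertex e v).
Proof.
move=> e_acyc c size_c /andP [cycle_c uniq_c]; apply: (e_acyc _ size_c).
by rewrite /ucycle uniq_c andbT; apply: sub_cycle cycle_c => x y /and3P [].
Qed.

Variable w : 'I_n.
Hypotheses (e_sym : symmetric e) (e_irr : irreflexive e) (leaf_v : nbr e v = [set w]).

Lemma leaf_nbr x : e x v = (x == w).
Proof. by rewrite e_sym; have /setP/(_ x) := leaf_v; rewrite !inE. Qed.

Lemma edges_del_leaf : edges (del_vertex e v) = edges e :\ [set v; w].
Proof.
apply/setP => E; rewrite in_setD1; apply/edgesP/andP => [[x [y [/and3P [exy xv yv] ->]]]|].
  split; last by apply/edgesP; exists x, y.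
  apply: contraNneq xv => vw_xy; have : v \in [set x; y] by rewrite vw_xy set21.
  by rewrite !inE eq_sym [v == y]eq_sym (negbTE yv) orbF.
case=> ne /edgesP [x [y [exy dE]]]; rewrite dE in ne; exists x, y; split => //.
rewrite /del_vertex /= exy /=; apply/andP; split; apply: contra_neq ne => vx; subst.
  by move: exy; rewrite e_sym leaf_nbr => /eqP ->.
by move: exy; rewrite leaf_nbr setUC => /eqP ->.
Qed.

Lemma card_edges_del_leaf : #|edges (del_vertex e v)| = #|edges e|.-1.
Proof.
have vw_edge : [set v; w] \in edges e by apply/edgesP; exists v, w; rewrite e_sym leaf_nbr.
by rewrite edges_del_leaf (cardsD1 [set v; w] (edges e)) vw_edge.
Qed.

Lemma deg_del_leaf u : u != w -> (deg e u).-1 <= (deg (del_vertex e v) u).-1.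
Proof.
move=> uw; case: (eqVneq u v) => [->|uv]; first by rewrite /deg leaf_v cards1.
rewrite -!subn1; apply/leq_sub2r/subset_leq_card/subsetP => y; rewrite !inE /del_vertex /= => euy.
rewrite euy uv; apply: contra_neq uw => yv.
by apply/eqP; rewrite -leaf_nbr -yv.
Qed.

Lemma deg_del_leaf_nbr : deg e w <= (deg (del_vertex e v) w).+1.
Proof.
rewrite /deg -add1n -(cards1 v); apply: leq_trans (leq_card_setU _ _).
apply/subset_leq_card/subsetP => y; rewrite !inE /del_vertex /= => ewy.
case: (eqVneq y v) => //= yv; rewrite ewy andbT.
by apply: contraFneq (e_irr w) => wv; rewrite {2}wv leaf_nbr.
Qed.

End DeleteVertex.

Lemma card_edges_gt0 n (e : rel 'I_n) u : 0 < deg e u -> 0 < #|edges e|.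
Proof.
case/card_gt0P => y; rewrite inE => euy.
by apply/card_gt0P; exists [set u; y]; apply/edgesP; exists u, y.
Qed.

Lemma forest_sum_deg_pred n (e : rel 'I_n) : symmetric e -> irreflexive e -> acyclic e ->
  \sum_u (deg e u).-1 <= #|edges e|.-1.
Proof.
move Ne : #|edges e| => N; elim: N e Ne => [|N IH] e Ne e_sym e_irr e_acyc.
  rewrite big1 // => u _; case: (posnP (deg e u)) => [-> //|/card_edges_gt0].
  by rewrite Ne.
have [E /edgesP [x0 [y0 [e0 _]]]] : exists E, E \in edges e.
  by apply/set0Pn; rewrite -card_gt0 Ne.
have [v [w leaf_v]] := acyclic_leaf e_sym e_irr e_acyc e0.
set e' := del_vertex e v.
have Ne' : #|edges e'| = N by rewrite (card_edges_del_leaf e_sym leaf_v) Ne.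
have := IH _ Ne' (del_vertex_sym _ e_sym) (del_vertex_irr _ e_irr) (del_vertex_acyclic e_acyc).
have le_w : deg e w <= (deg e' w).+1 := deg_del_leaf_nbr e_sym e_irr leaf_v.
rewrite [X in X <= _ -> _](bigD1 w) // [X in _ -> X <= _](bigD1 w) //=.
set S' := \sum_(u | u != w) (deg e' u).-1; set S := \sum_(u | u != w) (deg e u).-1.
have : S <= S' by apply: leq_sum => u; apply: deg_del_leaf.
clearbody S S'.
by case: (posnP (deg e' w)) => [|/card_edges_gt0]; rewrite ?Ne'; lia.
Qed.

Lemma bin2_mul2 d : 'C(d, 2) * 2 = d.-1 * d.-1.+1.
Proof. by case: d => [|d] //; rewrite mulnC -mul_bin_diag bin1 mulnC. Qed.

Lemma budget_quadratic_lt a S N k m :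
  a + S <= N.-1 -> a + k + 2 <= N -> m <= a -> m <= S -> k * k <= N -> 5 * k + 6 < N ->
  a * a.+1 + S * m.+1 + 2 < (N - k).-1 * (N - k).-1.+1.
Proof.
move=> aS_le a_le m_le_a m_le_S kN kN'.
case: (leqP N.-1 (2 * a)) => a_big.
  have : S * m.+1 <= (N.-1 - a) * (N.-1 - a).+1 by apply: leq_mul; lia.
  nia.
have : S * m.+1 <= (N.-1 - a) * a.+1 by apply: leq_mul; lia.
nia.
Qed.

(* With a the largest d.-1 and S the sum of the others, each other d.-1 is at most
   minn a S, so twice the sum of binomials is at most a (a + 1) + S (minn a S + 1). *)
Lemma sum_bin2_lt (I : finType) (d : I -> nat) N k :
  k * k <= N -> 5 * k + 6 < N -> (forall i, d i < N - k) -> \sum_i (d i).-1 <= N.-1 ->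
  \sum_i 'C(d i, 2) < 'C(N - k, 2) - 1.
Proof.
move=> kN kN' d_lt sum_le; have := bin2_mul2 (N - k).
case: (pickP (@predT I)) => [i0 _|I0]; last by rewrite big_pred0 //; nia.
case: (@arg_maxnP _ i0 predT d isT) => c _ c_max.
rewrite (bigD1 c) //= in sum_le.
set a := (d c).-1 in sum_le *; set S := \sum_(i | i != c) _ in sum_le.
have d_le i : i != c -> (d i).-1 <= minn a S.
  move=> ic; rewrite leq_min /S (bigD1 i) //= leq_addr andbT.
  by have := c_max i isT; rewrite /a; lia.
have sum2 : (\sum_i 'C(d i, 2)) * 2 <= a * a.+1 + S * (minn a S).+1.
  rewrite big_distrl (bigD1 c) //= bin2_mul2 leq_add2l /S big_distrl /=.
  by apply: leq_sum => i /d_le ?; rewrite bin2_mul2 leq_mul.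
have := @budget_quadratic_lt a S N k (minn a S).
have := d_lt c; rewrite /a; lia.
Qed.

Lemma not_feasible_bin2_pred N k :
  k * k <= N -> 5 * k + 6 < N -> ~ feasible N ('C(N - k, 2) - 1).
Proof.
move=> kN kN' [n [e [[e_sym e_irr] [e_acyc [card_E card_L]]]]].
case: (pickP (fun u => N - k <= deg e u)) => [u /= deg_u|deg_lt].
  have := bin2_deg_le_card_line_graph_edges e_irr u.
  have : 0 < 'C(N - k, 2) by rewrite bin_gt0; lia.
  by rewrite card_L; have := leq_bin2l 2 deg_u; lia.
have deg_lt' u : deg e u < N - k by rewrite ltnNge deg_lt.
have := forest_sum_deg_pred e_sym e_irr e_acyc; rewrite card_E => /(sum_bin2_lt kN kN' deg_lt').
by rewrite -card_L ltnNge card_line_graph_edges_le.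
Qed.

Lemma bin2_sub_sqrt_le N k : 100 <= N -> k * k <= N -> N < k.+1 * k.+1 ->
  (INR ('C(N - k, 2) - 1) <= INR N ^ 2 / 2 - 1 / 4 * INR N * sqrt (INR N))%R.
Proof.
move=> N_ge kN Nk.
have bin2_eq : 2 * ('C(N - k, 2) - 1) + 2 + 2 * k * N + N = N * N + k * k + k.
  have := bin2_mul2 (N - k); have : 0 < 'C(N - k, 2) by rewrite bin_gt0; nia.
  nia.
have b_eq := f_equal INR bin2_eq; rewrite -!plusE -!multE !plus_INR !mult_INR /= in b_eq.
have kN' : (INR k * INR k <= INR N)%R by rewrite -mult_INR; apply/le_INR/leP.
have Nk' : (INR N + 1 <= (INR k + 1) * (INR k + 1))%R.
  by rewrite -S_INR -(S_INR k) -mult_INR; apply/le_INR/leP.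
have N_ge' : (100 <= INR N)%R by rewrite (_ : 100%R = INR 100); [apply/le_INR/leP | simpl; lra].
have sqrt_ge0 := sqrt_pos (INR N); have sqrt_sq := sqrt_sqrt (INR N) ltac:(lra).
have : (sqrt (INR N) <= INR k + 1)%R by nra.
nra.
Qed.

Theorem mainTheorem9 :
  exists c1 : R, (0 < c1)%R /\
  exists N0 : nat, forall N : nat, N0 <= N ->
    exists M : nat,
      non_feasible N M /\
      (forall M' : nat, M' < M -> ~ non_feasible N M') /\
      (INR M <= INR N ^ 2 / 2 - c1 * INR N * sqrt (INR N))%R.
Proof.
exists (1 / 4)%R; split; first lra.
exists 100 => N N_ge; set k := Nat.sqrt N.
have [kN Nk] : k * k <= N /\ N < k.+1 * k.+1 by have := Nat.sqrt_spec N; lia.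
have non_feasible_k : non_feasible N ('C(N - k, 2) - 1).
  split; first by have := leq_bin2l 2 (leq_subr k N); lia.
  by apply: not_feasible_bin2_pred; nia.
have [M [[non_feasible_M M_min] _]] := dec_inh_nat_subset_has_unique_least_element
  (non_feasible N) (fun M => classic _) (ex_intro _ _ non_feasible_k).
exists M; split=> //; split.
  by move=> M' lt_M' /M_min /leP; lia.
exact: Rle_trans (le_INR _ _ (M_min _ non_feasible_k)) (bin2_sub_sqrt_le N_ge kN Nk).
Qed.
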